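(* Consider a set of market participants (at least two) and a sequence of market data points $x = 1,2,3,\dots$. For each participant $i$ and data point $x$, let $D(i,x)\in\mathbb{R}$ be the real time at which $x$ is delivered to participant $i$, with $D(i,x) < D(i,x+1)$. Suppose an ordering system achieves response time fairness when trigger points are unknown, in the following sense: the ordering system receives the delivery times $D$ and the submission times $S(i,a)$ of all trades (but not their trigger points), and outputs a strict order $O$ on the trades; and for every finite collection of trades with any submission times and for every assignment of trigger points $TP(i,a)$ to these trades satisfying $D(i,TP(i,a)) \le S(i,a)$, the output order satisfies: whenever $TP(i,a) = TP(j,b) = x$ and $S(i,a) - D(i,x) < S(j,b) - D(j,x)$, then $O(i,a) < O(j,b)$. Then necessarily $$D(i,y) - D(i,x) = D(j,y) - D(j,x) \quad \text{for all participants } i,j \text{ and all data points } x,y.$$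
   Context: A trade $(i,a)$ denotes the $a$-th trade submitted by participant $i$; $S(i,a)$ is the real time at which it is submitted. The trigger point $TP(i,a)$ is the market data point in response to which the trade was generated, and the response time is $RT(i,a) = S(i,a) - D(i,TP(i,a))$. Response time fairness (for trades in the same speed race) requires: if $TP(i,a)=TP(j,b)$ and $RT(i,a) < RT(j,b)$ then $O(i,a) < O(j,b)$, where $O(i,a)<O(j,b)$ means trade $(i,a)$ is forwarded to the exchange's matching engine before $(j,b)$. ''Trigger points unknown'' means the ordering can depend only on the delivery times and submission times, so it must satisfy the fairness condition simultaneously for every possible assignment of trigger points consistent with these times. *)

From Stdlib Require Import Reals List.
Open Scope R_scope.

(* A trade (i,a): the a-th trade of participant i. *)
Definition trade (P : Type) : Type := (P * nat)%type.

(* An ordering system (for fixed delivery times D, which it may use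
   implicitly): given a finite collection of trades [T] and their
   submission times [S], it outputs a relation [O T S t u] meaning
   "t is forwarded before u". It does NOT receive trigger points. *)
Definition ordering_system (P : Type) : Type :=
  list (trade P) -> (P -> nat -> R) -> trade P -> trade P -> Prop.

Definition strict_order_on {P : Type} (T : list (trade P))
    (ord : trade P -> trade P -> Prop) : Prop :=
  (forall t, In t T -> ~ ord t t) /\
  (forall t u v, In t T -> In u T -> In v T -> ord t u -> ord u v -> ord t v).

Definition rt_fair_unknown_TP {P : Type} (D : P -> nat -> R)
    (O : ordering_system P) : Prop :=
  forall (T : list (trade P)) (S : P -> nat -> R),
    NoDup T ->
    strict_order_on T (O T S) /\
    forall TP : P -> nat -> nat,
      (forall i a, In (i, a) T -> D i (TP i a) <= S i a) ->
      forall i a j b x,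
        In (i, a) T -> In (j, b) T ->
        TP i a = x -> TP j b = x ->
        S i a - D i x < S j b - D j x ->
        O T S (i, a) (j, b).

From Stdlib Require Import Reals List Lra ClassicalEpsilon.
Open Scope R_scope.

(* Suppose participants i and j have delivery gaps G(z) := D i z - D j z
   with G(y) < G(x).  Submit one trade for each, i's trade c later than j's,
   with G(y) < c < G(x), both late enough to be responses to x or to y.
   If both trades are triggered by x, i responded faster and must be ordered
   first; if both are triggered by y, j must be.  The ordering system cannot
   tell the two scenarios apart, so it would have to order the two trades
   both ways, contradicting strictness.  Hence G is constant. *)

Lemma strict_order_on_asym {P : Type} (T : list (trade P))
    (ord : trade P -> trade P -> Prop) (t u : trade P) :
  strict_order_on T ord -> In t T -> In u T -> ord t u -> ord u t -> False.
Proof.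
  intros [irrefl trans] Ht Hu Htu Hut.
  exact (irrefl t Ht (trans t u t Ht Hu Ht Htu Hut)).
Qed.

Lemma rt_fair_common_trigger {P : Type} (D : P -> nat -> R)
    (O : ordering_system P) :
  rt_fair_unknown_TP D O ->
  forall (T : list (trade P)) (S : P -> nat -> R) (x : nat),
    NoDup T ->
    (forall k a, In (k, a) T -> D k x <= S k a) ->
    forall i a j b, In (i, a) T -> In (j, b) T ->
      S i a - D i x < S j b - D j x -> O T S (i, a) (j, b).
Proof.
  intros Hfair T S x HT Hadm i a j b Hi Hj Hrt.
  destruct (Hfair T S HT) as [_ Hresp].
  exact (Hresp (fun _ _ => x) Hadm i a j b x Hi Hj eq_refl eq_refl Hrt).
Qed.

Definition pair_trades {P : Type} (i j : P) : list (trade P) :=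
  (i, 0%nat) :: (j, 0%nat) :: nil.

Lemma NoDup_pair_trades {P : Type} (i j : P) :
  i <> j -> NoDup (pair_trades i j).
Proof.
  intros Hij. constructor.
  - intros [Heq | []]. apply Hij. now injection Heq.
  - constructor; [intros [] | constructor].
Qed.

Definition offset_submission {P : Type} (i : P) (M c : R) : P -> nat -> R :=
  fun k _ => if excluded_middle_informative (k = i) then M + c else M.

Lemma offset_submission_self {P : Type} (i : P) M c a :
  offset_submission i M c i a = M + c.
Proof. unfold offset_submission. now destruct excluded_middle_informative. Qed.

Lemma offset_submission_other {P : Type} (i j : P) M c a :
  j <> i -> offset_submission i M c j a = M.
Proof. intros Hji. unfold offset_submission. now destruct excluded_middle_informative. Qed.

Lemma rt_fair_gap_not_decreasing {P : Type} (D : P -> nat -> R)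
    (O : ordering_system P) :
  rt_fair_unknown_TP D O ->
  forall i j x y, i <> j -> ~ D i y - D j y < D i x - D j x.
Proof.
  intros Hfair i j x y Hij Hlt.
  set (c := ((D i y - D j y) + (D i x - D j x)) / 2).
  set (M := Rmax (Rmax (D j x) (D j y)) (Rmax (D i x) (D i y) - c)).
  assert (HM : D j x <= M /\ D j y <= M /\ D i x <= M + c /\ D i y <= M + c).
  { pose proof (Rmax_l (D j x) (D j y)); pose proof (Rmax_r (D j x) (D j y)).
    pose proof (Rmax_l (D i x) (D i y)); pose proof (Rmax_r (D i x) (D i y)).
    pose proof (Rmax_l (Rmax (D j x) (D j y)) (Rmax (D i x) (D i y) - c)).
    pose proof (Rmax_r (Rmax (D j x) (D j y)) (Rmax (D i x) (D i y) - c)).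
    unfold M; lra. }
  set (T := pair_trades i j).
  set (S := offset_submission i M c).
  assert (Si : S i 0%nat = M + c) by apply offset_submission_self.
  assert (Sj : S j 0%nat = M) by (apply offset_submission_other; congruence).
  assert (Hadm : forall z, z = x \/ z = y ->
            forall k a, In (k, a) T -> D k z <= S k a).
  { intros z Hz k a [Heq | [Heq | []]]; injection Heq as <- <-;
      [rewrite Si | rewrite Sj]; destruct Hz as [-> | ->]; lra. }
  assert (Hi : In (i, 0%nat) T) by (left; reflexivity).
  assert (Hj : In (j, 0%nat) T) by (right; left; reflexivity).
  assert (HT : NoDup T) by now apply NoDup_pair_trades.
  assert (i_first : O T S (i, 0%nat) (j, 0%nat)).
  { apply (rt_fair_common_trigger D O Hfair T S x HT (Hadm x (or_introl eq_refl)));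
      auto.
    rewrite Si, Sj; unfold c; lra. }
  assert (j_first : O T S (j, 0%nat) (i, 0%nat)).
  { apply (rt_fair_common_trigger D O Hfair T S y HT (Hadm y (or_intror eq_refl)));
      auto.
    rewrite Si, Sj; unfold c; lra. }
  destruct (Hfair T S HT) as [Hstrict _].
  exact (strict_order_on_asym T (O T S) _ _ Hstrict Hi Hj i_first j_first).
Qed.

Theorem lemma1 (P : Type) (D : P -> nat -> R) (O : ordering_system P) :
  (exists i j : P, i <> j) ->
  (forall i x, D i x < D i (S x)) ->
  rt_fair_unknown_TP D O ->
  forall i j x y, D i y - D i x = D j y - D j x.
Proof.
  intros _ _ Hfair i j x y.
  destruct (excluded_middle_informative (i = j)) as [-> | Hij]; [reflexivity |].
  pose proof (rt_fair_gap_not_decreasing D O Hfair i j x y Hij).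
  pose proof (rt_fair_gap_not_decreasing D O Hfair i j y x Hij).
  lra.
Qed.
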